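(* Let $(X_{1,\infty},f_{1,\infty},\mu_{1,\infty})$ be a metric nonautonomous dynamical system and let $\mathcal{E}$ be the class of all sequences $\{\mathcal{P}_n\}$ of finite measurable partitions of $X_n$ for which there is $N\ge1$ with $\#\mathcal{P}_n\le N$ for all $n$. Then $\mathcal{E}$ is an admissible class, and it is maximal, i.e., there is no admissible class strictly containing it.
   Context: A metric NDS consists of probability spaces $(X_n,\mathcal{A}_n,\mu_n)$ and measurable maps $f_n:X_n\to X_{n+1}$ with $f_n\mu_n=\mu_{n+1}$; $f_k^n=f_{k+n-1}\circ\cdots\circ f_k$, $f_k^{-n}$ = preimage. An admissible class is a nonempty class $\mathcal{E}$ of sequences of finite measurable partitions $\{\mathcal{P}_n\}$ of $X_n$ such that (A) each member has $\#\mathcal{P}_n\le N$ for some $N$ and all $n$; (B) if $\mathcal{P}_{1,\infty}\in\mathcal{E}$ and $\mathcal{Q}_n$ is coarser than $\mathcal{P}_n$ for all $n$, then $\{\mathcal{Q}_n\}\in\mathcal{E}$; (C) if $\mathcal{P}_{1,\infty}\in\mathcal{E}$ and $m\ge1$ then $\{\bigvee_{i=0}^{m-1}f_k^{-i}\mathcal{P}_{k+i}\}_{k\ge1}\in\mathcal{E}$. *)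

From HB Require Import structures.
From mathcomp Require Import all_boot all_order all_algebra.
From mathcomp Require Import all_classical all_reals all_analysis.
Set Implicit Arguments. Unset Strict Implicit. Unset Printing Implicit Defensive.
Import Order.TTheory GRing.Theory Num.Theory.
Local Open Scope classical_set_scope.
Local Open Scope ring_scope.

Definition metric_NDS (R : realType) (d : nat -> measure_display)
  (X : forall n, measurableType (d n)) (mu : forall n, probability (X n) R)
  (f : forall n, X n -> X n.+1) : Prop :=
  forall n, measurable_fun setT (f n) /\
    (forall A : set (X n.+1), measurable A -> mu n.+1 A = mu n (f n @^-1` A)).

Fixpoint fiter (d : nat -> measure_display) (X : forall n, measurableType (d n))
  (f : forall n, X n -> X n.+1) (k i : nat) : X k -> X (i + k)%N :=
  match i return X k -> X (i + k)%N with
  | 0 => fun x => x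
  | i'.+1 => fun x => f (i' + k)%N (@fiter d X f k i' x)
  end.
Arguments fiter {d X} f k i.

Definition fin_meas_partition d (T : measurableType d) (P : set (set T)) : Prop :=
  finite_set P /\
  (forall A, P A -> measurable A /\ A !=set0) /\
  (forall A B, P A -> P B -> A `&` B !=set0 -> A = B) /\
  (forall x : T, exists2 A, P A & A x).

Definition card_le (T : Type) (P : set (set T)) (N : nat) : Prop :=
  exists g : nat -> set T, P `<=` [set g i | i in [set i : nat | (i < N)%N]].

Definition coarser (T : Type) (Q P : set (set T)) : Prop :=
  forall A, P A -> exists2 B, Q B & A `<=` B.

Definition partseq (d : nat -> measure_display) (X : forall n, measurableType (d n)) :=
  forall n, set (set (X n)).

Definition join_part (d : nat -> measure_display) (X : forall n, measurableType (d n))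
  (f : forall n, X n -> X n.+1) (P : partseq X) (m k : nat) : set (set (X k)) :=
  [set B | B !=set0 /\
     exists A : forall i, set (X (i + k)%N),
       (forall i, (i < m)%N -> P (i + k)%N (A i)) /\
       B = \bigcap_(i in [set i : nat | (i < m)%N]) (fiter f k i @^-1` A i)].
Arguments join_part {d X} f P m k.

Definition admissible (d : nat -> measure_display) (X : forall n, measurableType (d n))
  (f : forall n, X n -> X n.+1) (E : set (partseq X)) : Prop :=
  E !=set0 /\
  (forall P, E P -> forall n, fin_meas_partition (P n)) /\
  (* (A) *)
  (forall P, E P -> exists N : nat, forall n, card_le (P n) N) /\
  (* (B) *)
  (forall P Q : partseq X, E P ->
     (forall n, fin_meas_partition (Q n)) ->
     (forall n, coarser (Q n) (P n)) -> E Q) /\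
  (* (C) *)
  (forall P, E P -> forall m, (1 <= m)%N -> E (fun k => join_part f P m k)).

Definition bounded_class (d : nat -> measure_display) (X : forall n, measurableType (d n))
  : set (partseq X) :=
  [set P | (forall n, fin_meas_partition (P n)) /\
           exists N : nat, (1 <= N)%N /\ forall n, card_le (P n) N].
Arguments bounded_class {d} X.
Arguments admissible {d X} f E.
Arguments metric_NDS {R d X} mu f.

From Pilot Require Import Defs.
From HB Require Import structures.
From mathcomp Require Import all_boot all_order all_algebra.
From mathcomp Require Import all_classical all_reals all_analysis.
Local Open Scope classical_set_scope.

(* Cardinality bounds pass to coarser partitions, since each block of the
   coarser partition contains a block of the finer one; and the join of [m]
   pulled-back partitions with at most [N] blocks has at most [N ^ m] blocks,
   a block being determined by the indices of the [m] blocks it comes from.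
   Hence bounded cardinality is closed under (B) and (C).  Conversely (A)
   forces every member of an admissible class to have bounded cardinality, so
   no admissible class is larger. *)

(* [cardinality.v] also defines a [card_le]. *)
Local Notation card_le := Defs.card_le.

Lemma card_le_finite (T : Type) (P : set (set T)) N :
  card_le P N -> finite_set P.
Proof.
by move=> [g /sub_finite_set]; apply; apply: finite_image; exact: finite_II.
Qed.

Lemma card_le_leq (T : Type) (P : set (set T)) M N :
  (M <= N)%N -> card_le P M -> card_le P N.
Proof.
move=> MN [g Pg]; exists g => A /Pg [i iM <-]; exists i => //.
exact: leq_trans iM MN.
Qed.

Lemma card_le_coarser d (T : measurableType d) (Q P : set (set T)) N :
  fin_meas_partition P -> fin_meas_partition Q -> coarser Q P ->
  card_le P N -> card_le Q N.
Proof.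
move=> [_ [_ [_ Pcover]]] [_ [Qne [Qdisj _]]] QP [g Pg].
pose g' i := if pselect (exists2 B, Q B & g i `<=` B) is left e
             then sval (cid2 e) else set0.
exists g' => B QB.
have [x Bx] := (Qne B QB).2.
have [A PA Ax] := Pcover x.
have [i iN gA] := Pg A PA.
exists i => //; rewrite /g'; case: pselect => [e|]; last first.
  by have [B' QB' AB'] := QP A PA; case; exists B'; rewrite ?gA.
case: (cid2 e) => B' QB' gB' /=.
by apply: Qdisj => //; exists x; split => //; apply: gB'; rewrite gA.
Qed.

Lemma trivial_fin_meas_partition d (T : measurableType d) :
  fin_meas_partition [set @setT T].
Proof.
split; first exact: finite_set1.
split; first by move=> A ->; split => //; exists point.
by split; [move=> A B -> -> | move=> x; exists setT].
Qed.

Lemma card_le_set1 (T : Type) (A : set T) : card_le [set A] 1.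
Proof. by exists (fun=> A) => B ->; exists 0%N. Qed.

Section JoinPartition.
Context {d : nat -> measure_display} {X : forall n, measurableType (d n)}.
Context {f : forall n, X n -> X n.+1} {P : partseq X} {m : nat}.
Hypothesis f_meas : forall n, measurable_fun setT (f n).
Hypothesis P_part : forall n, fin_meas_partition (P n).

Lemma measurable_fiter k i : measurable_fun setT (fiter f k i).
Proof.
elim: i => [|i IH] /=; first exact: measurable_id.
exact: measurableT_comp (f_meas _) IH.
Qed.

Lemma join_part_measurable k B : join_part f P m k B -> measurable B.
Proof.
move=> [_ [A [PA ->]]]; apply: bigcap_measurableType => i /= im.
rewrite -[_ @^-1` _]setTI; apply: measurable_fiter => //.
exact: ((P_part _).2.1 _ (PA i im)).1.
Qed.

Lemma join_part_disjoint k B1 B2 :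
  join_part f P m k B1 -> join_part f P m k B2 -> B1 `&` B2 !=set0 -> B1 = B2.
Proof.
move=> [_ [A1 [PA1 ->]]] [_ [A2 [PA2 ->]]] [x [x1 x2]].
have A12 i : (i < m)%N -> A1 i = A2 i.
  move=> im; apply: (P_part _).2.2.1; [exact: PA1 | exact: PA2 |].
  by exists (fiter f k i x); split; [exact: x1 | exact: x2].
by apply/seteqP; split => y yA i im; [rewrite -A12 | rewrite A12] => //; exact: yA.
Qed.

Lemma join_part_cover k (x : X k) : exists2 B, join_part f P m k B & B x.
Proof.
pose block i := cid2 ((P_part (i + k)%N).2.2.2 (fiter f k i x)).
pose A i := s2val (block i).
have PA i : P (i + k)%N (A i) := s2valP (block i).
have Ax i : A i (fiter f k i x) := s2valP' (block i).
exists (\bigcap_(i in [set i | (i < m)%N]) (fiter f k i @^-1` A i));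
  last by move=> i _; exact: Ax.
by split; [exists x => i _; exact: Ax | exists A].
Qed.

Lemma join_part_card_le N k :
  (forall n, card_le (P n) N) -> card_le (join_part f P m k) (N ^ m).
Proof.
move=> PN; pose G n := sval (cid (PN n)).
have PG n : P n `<=` [set G n i | i in [set i | (i < N)%N]].
  exact: svalP (cid (PN n)).
pose block (c : {ffun 'I_m -> 'I_N}) : set (X k) :=
  [set x | forall i (im : (i < m)%N), G (i + k)%N (c (Ordinal im)) (fiter f k i x)].
exists (fun j => nth set0 [seq block c | c <- enum {ffun 'I_m -> 'I_N}] j).
move=> B [_ [A [PA ->]]].
have index_of (i : 'I_m) : exists j : 'I_N, G (i + k)%N j = A i.
  by have [j jN Gj] := PG _ _ (PA _ (ltn_ord i)); exists (Ordinal jN).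
pose c := [ffun i => sval (cid (index_of i))].
have Gc i (im : (i < m)%N) : G (i + k)%N (c (Ordinal im)) = A i.
  by rewrite ffunE; exact: svalP (cid (index_of (Ordinal im))).
have c_enum : c \in enum {ffun 'I_m -> 'I_N} by rewrite mem_enum.
exists (index c (enum {ffun 'I_m -> 'I_N})).
  have -> : (N ^ m = size (enum {ffun 'I_m -> 'I_N}))%N.
    by rewrite -cardE card_ffun !card_ord.
  by rewrite /= index_mem.
rewrite /= (nth_map c) ?index_mem // nth_index //.
by apply/seteqP; split => x /= xB i im; [rewrite -Gc | rewrite Gc]; exact: xB.
Qed.

Lemma join_part_fin_meas_partition N k :
  (forall n, card_le (P n) N) -> fin_meas_partition (join_part f P m k).
Proof.
move=> PN; split; first exact: card_le_finite (join_part_card_le _ k PN).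
split; first by move=> B JB; split; [exact: join_part_measurable | case: JB].
by split; [exact: join_part_disjoint | exact: join_part_cover].
Qed.

End JoinPartition.

Lemma bounded_class_admissible (d : nat -> measure_display)
    (X : forall n, measurableType (d n)) (f : forall n, X n -> X n.+1) :
  (forall n, measurable_fun setT (f n)) -> admissible f (bounded_class X).
Proof.
move=> f_meas; split.
  exists (fun n => [set setT]); split => [n|]; first exact: trivial_fin_meas_partition.
  by exists 1%N; split => // n; exact: card_le_set1.
split; first by move=> P [].
split; first by move=> P [_ [N [_ PN]]]; exists N.
split.
  move=> P Q [Ppart [N [N1 PN]]] Qpart QP; split => //; exists N; split => // n.
  exact: card_le_coarser (Ppart n) (Qpart n) (QP n) (PN n).
move=> P [Ppart [N [N1 PN]]] m _; split => [k|].
  exact: join_part_fin_meas_partition f_meas Ppart N k PN.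
exists (N ^ m)%N; split => [|k]; first by rewrite expn_gt0 N1.
exact: join_part_card_le N k PN.
Qed.

Lemma admissible_sub_bounded_class (d : nat -> measure_display)
    (X : forall n, measurableType (d n)) (f : forall n, X n -> X n.+1)
    (E : set (partseq X)) :
  admissible f E -> E `<=` bounded_class X.
Proof.
move=> [_ [Epart [Ecard _]]] P EP; split; first exact: Epart.
have [N PN] := Ecard P EP; exists N.+1; split => // n.
exact: card_le_leq (leqnSn N) (PN n).
Qed.

Theorem mainTheorem10 (R : realType) (d : nat -> measure_display)
  (X : forall n, measurableType (d n)) (mu : forall n, probability (X n) R)
  (f : forall n, X n -> X n.+1) :
  metric_NDS mu f ->
  admissible f (bounded_class X) /\
  (forall E' : set (partseq X), admissible f E' ->
     bounded_class X `<=` E' -> E' = bounded_class X).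
Proof.
move=> NDS; split; first by apply: bounded_class_admissible => n; case: (NDS n).
move=> E' E'adm bounded_sub; apply/seteqP; split => //.
exact: admissible_sub_bounded_class E'adm.
Qed.
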